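(* Let $R$ be any nonempty set of reward functions $r':\mathcal{S}\times\mathcal{A}\to\mathbb{R}$. Then there exists a (time-indexed) reward function $r=(r_t)_{t=1}^T$ with $r_t:\mathcal{S}\times\mathcal{A}\to[-\infty,\infty)$ such that $$\arg\max_{\pi\in\Pi}J(\pi,r)\subseteq\arg\max_{\pi\in\Pi}\ \inf_{r'\in R}\mathbb{E}_\pi\Big[\sum_{t=1}^T r'(s_t,a_t)\Big].$$
   Context: Finite-horizon MDP: finite state set $\mathcal{S}$, finite action set $\mathcal{A}$, horizon $T\ge1$, initial distribution $p_1$, transition kernel $p(s'\mid s,a)$. $\Pi$ is the set of Markov (possibly time-dependent) policies $\pi=(\pi_t(\cdot\mid s))_{t=1}^T$, with $\pi(a_t\mid s_t)$ meaning $\pi_t(a_t\mid s_t)$; $\mathbb{E}_\pi$ is expectation over trajectories generated by $\pi$. For a time-indexed reward $r$ (values $-\infty$ allowed), the MaxEnt RL objective is $J(\pi,r)=\mathbb{E}_\pi[\sum_{t=1}^T r_t(s_t,a_t)]+\mathcal{H}_\pi[a\mid s]$ with $\mathcal{H}_\pi[a\mid s]=\mathbb{E}_\pi[-\sum_{t=1}^T\log\pi(a_t\mid s_t)]$ ($0\log0=0$). *)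

From mathcomp Require Import all_boot.
From Stdlib Require Import Reals ClassicalEpsilon.
Set Implicit Arguments.
Unset Strict Implicit.
Unset Printing Implicit Defensive.

Inductive ER : Type := Fin (x : R) | NegInf.

Definition ERplus (x y : ER) : ER :=
  match x, y with Fin a, Fin b => Fin (a + b)%R | _, _ => NegInf end.

Definition ERle (x y : ER) : Prop :=
  match x, y with
  | NegInf, _ => True
  | Fin _, NegInf => False
  | Fin a, Fin b => (a <= b)%R
  end.

(* scaling by a probability weight, with the convention 0 * (-oo) = 0 *)
Definition ERscale (p : R) (x : ER) : ER :=
  match x with
  | Fin a => Fin (p * a)%R
  | NegInf => if Req_EM_T p 0 then Fin 0%R else NegInf
  end.

Definition is_glbER (E : ER -> Prop) (v : ER) : Prop :=
  (forall y, E y -> ERle v y) /\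
  (forall w, (forall y, E y -> ERle w y) -> ERle w v).

(* infimum of a set of reals, taking values in [-oo, oo)
   (it exists for nonempty sets; NegInf when unbounded below) *)
Definition ERinf (E : R -> Prop) : ER :=
  epsilon (inhabits NegInf) (is_glbER (fun v => exists x, E x /\ v = Fin x)).

Section MDP.
Variables (S A : finType) (T : nat).

(* trajectories (s_1,a_1),...,(s_T,a_T); time t = 1..T is the ordinal t-1 *)
Definition traj := {ffun 'I_T -> S * A}.

(* Markov, time-dependent policy: pi t s a = pi_t(a | s) *)
Definition policy := 'I_T -> S -> A -> R.

Definition is_policy (pi : policy) : Prop :=
  (forall t s a, (0 <= pi t s a)%R) /\
  (forall t s, \big[Rplus/0%R]_(a : A) pi t s a = 1%R).

Variables (p1 : S -> R) (p : S -> A -> S -> R). (* p s a s' = p(s'|s,a) *)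

(* initial-distribution / transition factor at time t *)
Definition dyn_factor (tau : traj) (t : 'I_T) : R :=
  match nat_of_ord t with
  | 0 => p1 (tau t).1
  | k.+1 => match @insub nat (fun n => n < T) 'I_T k with
            | Some j => p (tau j).1 (tau j).2 (tau t).1
            | None => 1%R
            end
  end.

Definition traj_prob (pi : policy) (tau : traj) : R :=
  \big[Rmult/1%R]_(t : 'I_T) (dyn_factor tau t * pi t (tau t).1 (tau t).2)%R.

Definition ExpR (pi : policy) (F : traj -> R) : R :=
  \big[Rplus/0%R]_(tau : traj) (traj_prob pi tau * F tau)%R.

Definition ExpER (pi : policy) (F : traj -> ER) : ER :=
  \big[ERplus/Fin 0%R]_(tau : traj) ERscale (traj_prob pi tau) (F tau).

(* H_pi[a|s] = E_pi[ - sum_t log pi_t(a_t|s_t) ]; 0 log 0 = 0 holds since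
   any trajectory with pi_t(a_t|s_t) = 0 has probability 0. *)
Definition entropy (pi : policy) : R :=
  ExpR pi (fun tau => (- \big[Rplus/0%R]_(t : 'I_T) ln (pi t (tau t).1 (tau t).2))%R).

Definition J (pi : policy) (r : 'I_T -> S -> A -> ER) : ER :=
  ERplus (ExpER pi (fun tau => \big[ERplus/Fin 0%R]_(t : 'I_T) r t (tau t).1 (tau t).2))
         (Fin (entropy pi)).

Definition ret (pi : policy) (r' : S -> A -> R) : R :=
  ExpR pi (fun tau => \big[Rplus/0%R]_(t : 'I_T) r' (tau t).1 (tau t).2).

Definition robust (Rset : (S -> A -> R) -> Prop) (pi : policy) : ER :=
  ERinf (fun v => exists r', Rset r' /\ v = ret pi r').

Definition argmax_J (r : 'I_T -> S -> A -> ER) (pi : policy) : Prop :=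
  is_policy pi /\ forall pi', is_policy pi' -> ERle (J pi' r) (J pi r).

Definition argmax_robust (Rset : (S -> A -> R) -> Prop) (pi : policy) : Prop :=
  is_policy pi /\ forall pi', is_policy pi' -> ERle (robust Rset pi') (robust Rset pi).

End MDP.

(* Let pi* maximise the robust objective: it exists because the robust objective, an
   infimum of functions continuous in the policy, is upper semicontinuous on the compact
   set of policies. Take r_t = ln pi*_t, which is -oo off the support of pi*. Writing P_pi
   for the law of trajectories under pi, the dynamics factors cancel in ln (P_pi* / P_pi),
   so J(pi, r) = - KL(P_pi, P_pi* ) <= 0 = J(pi*, r). By Gibbs' inequality every maximiser
   pi of J therefore has P_pi = P_pi*, and the robust objective depends on pi only through
   P_pi. *)

From mathcomp Require Import all_boot all_algebra.
From mathcomp Require Import all_classical all_reals all_analysis.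
From mathcomp Require Import Rstruct Rstruct_topology.
From Stdlib Require Import Rbase Exp_prop Rpower Lra ClassicalEpsilon Classical.
Import ArrowAsProduct.
Set Implicit Arguments.
Unset Strict Implicit.
Unset Printing Implicit Defensive.
Local Open Scope classical_set_scope.
Local Open Scope R_scope.

Lemma Rsum_ge0 (I : finType) (P : pred I) (g : I -> R) :
  (forall i, P i -> 0 <= g i) -> 0 <= \big[Rplus/0]_(i | P i) g i.
Proof. by move=> g_ge0; apply: (big_ind (fun x => 0 <= x)) => // [|x y]; lra. Qed.

Lemma Rprod_ge0 (I : finType) (P : pred I) (g : I -> R) :
  (forall i, P i -> 0 <= g i) -> 0 <= \big[Rmult/1]_(i | P i) g i.
Proof.
by move=> g_ge0; apply: (big_ind (fun x => 0 <= x)) => // [|x y]; [lra | apply: Rmult_le_pos].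
Qed.

Lemma Rprod_gt0 (I : finType) (g : I -> R) :
  (forall i, 0 < g i) -> 0 < \big[Rmult/1]_i g i.
Proof.
by move=> g_gt0; apply: (big_ind (fun x => 0 < x)) => // [|x y]; [lra | apply: Rmult_lt_0_compat].
Qed.

Lemma Rprod_neq0 (I : finType) (g : I -> R) (i : I) :
  \big[Rmult/1]_j g j <> 0 -> g i <> 0.
Proof. by move=> prod_neq0 gi0; apply: prod_neq0; rewrite (bigD1 i) //= gi0 Rmult_0_l. Qed.

Lemma Rsum_eq0_ge0 (I : finType) (g : I -> R) (i : I) :
  (forall j, 0 <= g j) -> \big[Rplus/0]_j g j = 0 -> g i = 0.
Proof.
move=> g_ge0; rewrite (bigD1 i) //=.
have := Rsum_ge0 (fun j _ => g_ge0 j) (P := fun j => j != i); have := g_ge0 i; lra.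
Qed.

Lemma Rsum_eq1_inhabited (I : finType) (g : I -> R) :
  \big[Rplus/0]_i g i = 1 -> inhabited I.
Proof.
move=> sum1; apply: NNPP => I_empty; move: sum1; rewrite big1 => [|i _]; first lra.
by case: I_empty.
Qed.

Lemma Rsum_sub (I : finType) (f g : I -> R) :
  \big[Rplus/0]_i (f i - g i) = \big[Rplus/0]_i f i - \big[Rplus/0]_i g i.
Proof. by rewrite /Rminus big_split (big_morph Ropp Ropp_plus_distr Ropp_0). Qed.

Lemma ln_Rprod (I : finType) (g : I -> R) :
  (forall i, 0 < g i) -> ln (\big[Rmult/1]_i g i) = \big[Rplus/0]_i ln (g i).
Proof.
move=> g_gt0; suff [] : 0 < \big[Rmult/1]_i g i /\
    ln (\big[Rmult/1]_i g i) = \big[Rplus/0]_i ln (g i) by [].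
apply: (big_ind2 (fun x y => 0 < x /\ ln x = y)) => [|x1 x2 y1 y2 [x1_gt0 <-] [x2_gt0 <-]|i _].
- by split; [lra | exact: ln_1].
- by split; [exact: Rmult_lt_0_compat | exact: ln_mult].
- by split.
Qed.

(* [ln x < x - 1] at [x = a / b]. *)
Lemma mul_ln_ratio_lt (a b : R) :
  0 < a -> 0 < b -> a <> b -> b * (ln a - ln b) < a - b.
Proof.
move=> a_gt0 b_gt0 neq_ab.
have ratio_neq0 : ln a - ln b <> 0.
  by move=> eq0; apply: neq_ab; apply: ln_inv => //; lra.
have := exp_ineq1 _ ratio_neq0.
rewrite /Rminus exp_plus exp_Ropp !exp_ln // => lt_ratio.
have : b * (1 + (ln a + - ln b)) < b * (a * / b) by apply: Rmult_lt_compat_l.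
have -> : b * (a * / b) = a by field; lra.
lra.
Qed.

Lemma gibbs_term_gt0 (a b : R) : 0 <= a -> 0 <= b -> (0 < a -> 0 < b) -> a <> b ->
  0 < b - a - a * (ln b - ln a).
Proof.
move=> a_ge0 b_ge0 supp neq_ab; have [a_gt0|a0] := Rle_lt_or_eq_dec _ _ a_ge0; last first.
  by rewrite -a0 Rmult_0_l; rewrite -a0 in neq_ab; lra.
have := mul_ln_ratio_lt (supp a_gt0) a_gt0 (nesym neq_ab); lra.
Qed.

Lemma ERle_refl x : ERle x x.
Proof. by case: x => [a|] //=; lra. Qed.

Lemma ERle_trans x y z : ERle x y -> ERle y z -> ERle x z.
Proof. by case: x => [a|]; case: y => [b|]; case: z => [c|] //=; lra. Qed.

Lemma ERle_total x y : ERle x y \/ ERle y x.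
Proof.
case: x => [a|]; case: y => [b|] /=; [|by right|by left|by left].
by have [|] := Rle_or_lt a b; [left | right; lra].
Qed.

Lemma ERsum_Fin (I : finType) (P : pred I) (g : I -> R) :
  \big[ERplus/Fin 0]_(i | P i) Fin (g i) = Fin (\big[Rplus/0]_(i | P i) g i).
Proof. by rewrite (big_morph Fin (id1 := Fin 0) (op1 := ERplus)). Qed.

Lemma ERsum_NegInf (I : finType) (F : I -> ER) (i : I) :
  F i = NegInf -> \big[ERplus/Fin 0]_j F j = NegInf.
Proof.
move=> Fi; have : i \in index_enum I := mem_index_enum i.
elim: (index_enum I) => // j s IH; rewrite inE big_cons => /orP [/eqP <-|/IH ->].
  by rewrite Fi.
by case: (F j).
Qed.

Lemma ERscale0 (x : ER) : ERscale 0 x = Fin 0.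
Proof. by case: x => [a|] /=; [rewrite Rmult_0_l | case: Req_EM_T]. Qed.

Lemma ER_glb_exists (E : R -> Prop) : (exists x, E x) ->
  exists v, is_glbER (fun v => exists x, E x /\ v = Fin x) v.
Proof.
move=> [x0 Ex0].
have [[m m_lb]|unbounded] := classic (exists m, forall x, E x -> m <= x); last first.
  exists NegInf; split => // [[c|]] // c_lb; apply: unbounded; exists c => x Ex.
  exact: (c_lb (Fin x) (ex_intro _ x (conj Ex erefl))).
have ubd : bound (fun y => E (- y)) by exists (- m) => y /m_lb; lra.
have E_opp_neq0 : exists y, E (- y) by exists (- x0); rewrite Ropp_involutive.
have [l [l_ub l_lub]] := completeness _ ubd E_opp_neq0.
exists (Fin (- l)); split.
  move=> _ [x [Ex ->]] /=.
  have : - x <= l by apply: l_ub; rewrite Ropp_involutive.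
  lra.
case=> [c|] // c_lb /=.
suff : l <= - c by lra.
apply: l_lub => y Ey; have := c_lb (Fin (- y)) (ex_intro _ (- y) (conj Ey erefl)) => /=; lra.
Qed.

Lemma ERinf_geP (E : R -> Prop) (c : R) : (exists x, E x) ->
  ERle (Fin c) (ERinf E) <-> forall x, E x -> c <= x.
Proof.
move=> E_neq0; have [inf_lb inf_glb] : is_glbER _ (ERinf E) :=
  epsilon_spec _ _ (ER_glb_exists E_neq0).
split => [c_le x Ex | c_lb].
  exact: ERle_trans c_le (inf_lb (Fin x) (ex_intro _ x (conj Ex erefl))).
by apply: inf_glb => _ [x [Ex ->]]; apply: c_lb.
Qed.

Section TrajectoryDistribution.
Variables (S A : finType) (T : nat) (p1 : S -> R) (p : S -> A -> S -> R).
Hypotheses (hp1_nonneg : forall s, 0 <= p1 s)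
  (hp1_sum : \big[Rplus/0]_s p1 s = 1)
  (hp_nonneg : forall s a s', 0 <= p s a s')
  (hp_sum : forall s a, \big[Rplus/0]_s' p s a s' = 1).

Local Notation traj := (traj S A T).
Local Notation policy := (policy S A T).

Definition step_prob (pi : policy) (tau : traj) (t : 'I_T) : R :=
  dyn_factor p1 p tau t * pi t (tau t).1 (tau t).2.

Lemma dyn_factor_ge0 (tau : traj) t : 0 <= dyn_factor p1 p tau t.
Proof. by rewrite /dyn_factor; case: (nat_of_ord t) => [|k] //; case: insubP => //; lra. Qed.

Lemma traj_prob_ge0 (pi : policy) (tau : traj) :
  is_policy pi -> 0 <= traj_prob p1 p pi tau.
Proof.
move=> [pi_ge0 _]; apply: Rprod_ge0 => t _.
by apply: Rmult_le_pos; [exact: dyn_factor_ge0 | exact: pi_ge0].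
Qed.

Lemma traj_prob_support (pi : policy) (tau : traj) (t : 'I_T) :
  is_policy pi -> traj_prob p1 p pi tau <> 0 ->
  0 < dyn_factor p1 p tau t /\ 0 < pi t (tau t).1 (tau t).2.
Proof.
move=> [pi_ge0 _] /(Rprod_neq0 (i := t)) step_neq0.
have := dyn_factor_ge0 tau t; have := pi_ge0 t (tau t).1 (tau t).2.
by case/Rle_lt_or_eq_dec=> [pi_gt0|pi0]; case/Rle_lt_or_eq_dec=> [dyn_gt0|dyn0];
  split => //; apply: False_ind; apply: step_neq0; rewrite -?pi0 -?dyn0; ring.
Qed.

Lemma eq_dyn_factor (tau tau' : traj) (t : 'I_T) :
  tau t = tau' t -> (forall j : 'I_T, (nat_of_ord j).+1 = t -> tau j = tau' j) ->
  dyn_factor p1 p tau t = dyn_factor p1 p tau' t.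
Proof.
move=> eq_t eq_prev; rewrite /dyn_factor eq_t.
case E: (nat_of_ord t) => [|k] //.
by case: insubP => [j _ jk|] //; rewrite (eq_prev j) // jk E.
Qed.

Definition set_step (tau : traj) (j : 'I_T) (x : S * A) : traj :=
  [ffun t => if t == j then x else tau t].

Lemma set_step_id (tau : traj) j x : (set_step tau j x == tau) = (tau j == x).
Proof.
apply/eqP/eqP => [<-|tau_j]; first by rewrite ffunE eqxx.
by apply/ffunP => t; rewrite ffunE; case: (t =P j) => // ->.
Qed.

Lemma set_stepK (tau : traj) j x y : set_step (set_step tau j x) j y = set_step tau j y.
Proof. by apply/ffunP => t; rewrite !ffunE; case: (t =P j). Qed.

Lemma dyn_factor_set_step (tau : traj) (j : 'I_T) :
  exists2 c : S -> R, \big[Rplus/0]_s c s = 1 &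
    forall x, dyn_factor p1 p (set_step tau j x) j = c x.1.
Proof.
case: j => [[|k] lt_kT]; rewrite /dyn_factor /=.
  by exists p1 => // x; rewrite ffunE eqxx.
case: insubP => [i _ ik|/negP []]; last exact: ltnW.
have neq_ij : (i == Ordinal lt_kT) = false.
  by apply/negbTE/eqP => /(congr1 val) /=; rewrite ik => /n_Sn.
by exists (p (tau i).1 (tau i).2) => // x; rewrite !ffunE eqxx neq_ij.
Qed.

Lemma step_prob_set_step_sum (pi : policy) (tau : traj) (j : 'I_T) :
  is_policy pi -> \big[Rplus/0]_(x : S * A) step_prob pi (set_step tau j x) j = 1.
Proof.
move=> [_ pi_sum]; have [c c_sum c_dyn] := dyn_factor_set_step tau j.
under eq_bigr do rewrite /step_prob c_dyn ffunE eqxx.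
rewrite -(pair_big xpredT xpredT (fun s a => c s * pi j s a)) /= -c_sum.
by apply: eq_bigr => s _; rewrite -big_distrr /= pi_sum Rmult_1_r.
Qed.

(* The trajectories padded with [x0] from step [k] on stand for the prefixes of length [k];
   summing out step [k] by normalisation of policy and dynamics gives [prefix_prob_mass]. *)
Definition padded (x0 : S * A) (k : nat) (tau : traj) : bool :=
  [forall t : 'I_T, (k <= t)%nat ==> (tau t == x0)].

Definition prefix_prob (pi : policy) (k : nat) (tau : traj) : R :=
  \big[Rmult/1]_(t : 'I_T | (t < k)%nat) step_prob pi tau t.

Lemma paddedS x0 (tau : traj) (j : 'I_T) :
  padded x0 j tau = padded x0 j.+1 tau && (tau j == x0).
Proof.
apply/forallP/andP => [padded_j | [/forallP padded_Sj tau_j] t].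
  split; last by have := padded_j j; rewrite leqnn.
  by apply/forallP => t; apply/implyP => /ltnW lt_jt; apply: (implyP (padded_j t)).
apply/implyP; rewrite leq_eqVlt => /orP [/eqP/val_inj <- //|].
exact: (implyP (padded_Sj t)).
Qed.

Lemma padded_set_step x0 k (tau : traj) (j : 'I_T) x :
  (j < k)%nat -> padded x0 k (set_step tau j x) = padded x0 k tau.
Proof.
move=> lt_jk; apply: eq_forallb => t; rewrite ffunE.
by case: (t =P j) => [->|//]; rewrite leqNgt lt_jk.
Qed.

Lemma prefix_probS (pi : policy) (tau : traj) (j : 'I_T) :
  prefix_prob pi j.+1 tau = step_prob pi tau j * prefix_prob pi j tau.
Proof.
rewrite /prefix_prob (bigD1 j) //=; congr (_ * _); apply: eq_bigl => t.
by rewrite ltnS ltn_neqAle andbC -val_eqE.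
Qed.

Lemma prefix_prob_set_step (pi : policy) k (tau : traj) (j : 'I_T) x :
  (k <= j)%nat -> prefix_prob pi k (set_step tau j x) = prefix_prob pi k tau.
Proof.
move=> le_kj; apply: eq_bigr => t lt_tk.
have set_other (i : 'I_T) : (i < k)%nat -> set_step tau j x i = tau i.
  move=> lt_ik; rewrite ffunE; case: (i =P j) => // eq_ij.
  by move: lt_ik; rewrite eq_ij ltnNge le_kj.
rewrite /step_prob set_other //; congr (_ * _).
by apply: eq_dyn_factor => [|i eq_it]; rewrite set_other // (leq_ltn_trans _ lt_tk) // -eq_it.
Qed.

Lemma sum_padded_set_step x0 (j : 'I_T) (F : traj -> R) x :
  \big[Rplus/0]_(tau | padded x0 j.+1 tau && (tau j == x)) F tau =
  \big[Rplus/0]_(tau | padded x0 j tau) F (set_step tau j x).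
Proof.
rewrite (reindex_onto (fun tau => set_step tau j x) (fun tau => set_step tau j x0)); last first.
  by move=> tau /andP [_ /eqP tau_j]; rewrite set_stepK; apply/eqP; rewrite set_step_id tau_j.
apply: eq_bigl => tau.
by rewrite padded_set_step // ffunE !eqxx andbT set_stepK set_step_id paddedS.
Qed.

Lemma prefix_prob_mass (pi : policy) x0 k :
  is_policy pi -> (k <= T)%nat -> \big[Rplus/0]_(tau | padded x0 k tau) prefix_prob pi k tau = 1.
Proof.
move=> pi_policy; elim: k => [_|k IH lt_kT].
  rewrite (big_pred1 [ffun=> x0]) => [|tau]; first by rewrite /prefix_prob big_pred0.
  apply/forallP/eqP => [tau_x0|->]; last by move=> t; rewrite ffunE eqxx.
  by apply/ffunP => t; rewrite ffunE; apply/eqP; apply: tau_x0.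
pose j := Ordinal lt_kT.
rewrite (partition_big (fun tau : traj => tau j) xpredT) //=.
under eq_bigr => x _ do rewrite (sum_padded_set_step x0 j (prefix_prob pi k.+1)).
rewrite exchange_big /= -[RHS](IH (ltnW lt_kT)); apply: eq_bigr => tau _.
under eq_bigr do rewrite (prefix_probS pi _ j) prefix_prob_set_step //.
by rewrite -big_distrl /= step_prob_set_step_sum // Rmult_1_l.
Qed.

Lemma traj_prob_mass (pi : policy) (x0 : S * A) :
  is_policy pi -> \big[Rplus/0]_tau traj_prob p1 p pi tau = 1.
Proof.
move=> pi_policy; rewrite -(prefix_prob_mass x0 pi_policy (leqnn T)).
apply: eq_big => [tau|tau _]; last by apply: eq_bigl => t; rewrite ltn_ord.
by symmetry; apply/forallP => t; rewrite leqNgt ltn_ord.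
Qed.

End TrajectoryDistribution.

Section MaxEntObjective.
Variables (S A : finType) (T : nat) (p1 : S -> R) (p : S -> A -> S -> R).
Hypotheses (hp1_nonneg : forall s, 0 <= p1 s)
  (hp1_sum : \big[Rplus/0]_s p1 s = 1)
  (hp_nonneg : forall s a s', 0 <= p s a s')
  (hp_sum : forall s a, \big[Rplus/0]_s' p s a s' = 1).

Local Notation traj := (traj S A T).
Local Notation policy := (policy S A T).
Local Notation traj_prob := (traj_prob p1 p).

Definition log_reward (sig : policy) : 'I_T -> S -> A -> ER :=
  fun t s a => if Rlt_dec 0 (sig t s a) then Fin (ln (sig t s a)) else NegInf.

Definition log_lik (pi : policy) (tau : traj) : R :=
  \big[Rplus/0]_(t : 'I_T) ln (pi t (tau t).1 (tau t).2).

Lemma log_reward_sum (sig : policy) (tau : traj) :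
  (forall t, 0 < sig t (tau t).1 (tau t).2) ->
  \big[ERplus/Fin 0]_t log_reward sig t (tau t).1 (tau t).2 = Fin (log_lik sig tau).
Proof.
move=> sig_gt0; rewrite -ERsum_Fin; apply: eq_bigr => t _.
by rewrite /log_reward; case: Rlt_dec => // /(_ (sig_gt0 t)).
Qed.

Lemma log_reward_sum_neq_NegInf (sig : policy) (tau : traj) (t : 'I_T) :
  \big[ERplus/Fin 0]_t log_reward sig t (tau t).1 (tau t).2 <> NegInf ->
  0 < sig t (tau t).1 (tau t).2.
Proof.
move=> sum_neq; apply: Rnot_le_lt => sig_le0; apply: sum_neq; apply: (ERsum_NegInf (i := t)).
by rewrite /log_reward; case: Rlt_dec => // sig_gt0; lra.
Qed.

Lemma ln_traj_prob (pi : policy) (tau : traj) : is_policy pi -> traj_prob pi tau <> 0 ->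
  ln (traj_prob pi tau) = \big[Rplus/0]_t ln (dyn_factor p1 p tau t) + log_lik pi tau.
Proof.
move=> pi_policy q_neq0.
have supp t := traj_prob_support hp1_nonneg hp_nonneg t pi_policy q_neq0.
rewrite ln_Rprod => [|t]; last by have [? ?] := supp t; apply: Rmult_lt_0_compat.
by rewrite /log_lik -big_split; apply: eq_bigr => t _; have [? ?] := supp t; rewrite ln_mult.
Qed.

Lemma traj_prob_gt0 (pi sig : policy) (tau : traj) :
  is_policy pi -> traj_prob pi tau <> 0 -> (forall t, 0 < sig t (tau t).1 (tau t).2) ->
  0 < traj_prob sig tau.
Proof.
move=> pi_policy q_neq0 sig_gt0; apply: Rprod_gt0 => t.
have [dyn_gt0 _] := traj_prob_support hp1_nonneg hp_nonneg t pi_policy q_neq0.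
exact: Rmult_lt_0_compat.
Qed.

Lemma J_log_reward (sig pi : policy) : is_policy sig -> is_policy pi ->
  (forall tau, traj_prob pi tau <> 0 -> forall t, 0 < sig t (tau t).1 (tau t).2) ->
  J p1 p pi (log_reward sig) =
  Fin (\big[Rplus/0]_tau (traj_prob pi tau * (ln (traj_prob sig tau) - ln (traj_prob pi tau)))).
Proof.
move=> sig_policy pi_policy supp; rewrite /J /ExpER.
have term_eq tau : ERscale (traj_prob pi tau)
    (\big[ERplus/Fin 0]_t log_reward sig t (tau t).1 (tau t).2) =
    Fin (traj_prob pi tau * log_lik sig tau).
  have [->|q_neq0] := Req_dec (traj_prob pi tau) 0; first by rewrite ERscale0 Rmult_0_l.
  by rewrite log_reward_sum //; apply: supp.
rewrite (eq_bigr _ (fun tau _ => term_eq tau)) ERsum_Fin /= /entropy /ExpR -big_split /=; congr Fin; apply: eq_bigr => tau _.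
have [->|q_neq0] := Req_dec (traj_prob pi tau) 0; first by ring.
have sig_neq0 := Rgt_not_eq _ _ (traj_prob_gt0 pi_policy q_neq0 (supp tau q_neq0)).
rewrite !ln_traj_prob // -/(log_lik pi tau).
ring.
Qed.

Lemma J_log_reward_self (sig : policy) : is_policy sig -> J p1 p sig (log_reward sig) = Fin 0.
Proof.
move=> sig_policy; rewrite J_log_reward // => [|tau q_neq0 t].
  by congr Fin; apply: big1 => tau _; rewrite Rminus_diag Rmult_0_r.
by have [] := traj_prob_support hp1_nonneg hp_nonneg t sig_policy q_neq0.
Qed.

Lemma J_log_reward_support (sig pi : policy) (tau : traj) (t : 'I_T) :
  J p1 p pi (log_reward sig) <> NegInf -> traj_prob pi tau <> 0 ->
  0 < sig t (tau t).1 (tau t).2.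
Proof.
rewrite /J /ExpER => J_neq q_neq0; apply: log_reward_sum_neq_NegInf => sum_eq.
apply: J_neq; rewrite (ERsum_NegInf (i := tau)) // sum_eq /=.
by case: Req_EM_T.
Qed.

Lemma traj_prob_eq_of_J_log_reward (sig pi : policy) (x0 : S * A) :
  is_policy sig -> is_policy pi -> ERle (Fin 0) (J p1 p pi (log_reward sig)) ->
  forall tau, traj_prob pi tau = traj_prob sig tau.
Proof.
move=> sig_policy pi_policy J_ge0.
have supp tau : traj_prob pi tau <> 0 -> forall t, 0 < sig t (tau t).1 (tau t).2.
  by move=> q_neq0 t; apply: J_log_reward_support q_neq0 => J_eq; rewrite J_eq in J_ge0.
move: J_ge0; rewrite J_log_reward //= => kl_le0.
pose gap tau := traj_prob sig tau - traj_prob pi tau -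
  traj_prob pi tau * (ln (traj_prob sig tau) - ln (traj_prob pi tau)).
have gap_pos tau : traj_prob pi tau <> traj_prob sig tau -> 0 < gap tau.
  apply: gibbs_term_gt0; [exact: traj_prob_ge0 | exact: traj_prob_ge0 |].
  by move=> /Rgt_not_eq q_neq0; apply: traj_prob_gt0 pi_policy q_neq0 (supp tau q_neq0).
have gap_ge0 tau : 0 <= gap tau.
  have [q_eq|/gap_pos] := Req_dec (traj_prob pi tau) (traj_prob sig tau); last lra.
  by rewrite /gap q_eq !Rminus_diag Rmult_0_r; lra.
have gap_sum0 : \big[Rplus/0]_tau gap tau = 0.
  apply: Rle_antisym; last exact: Rsum_ge0.
  rewrite !Rsum_sub !(traj_prob_mass hp1_sum hp_sum x0) //.
move: kl_le0; set kl := \big[Rplus/0]_tau _; lra.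
move=> tau; apply: NNPP => q_neq; have := gap_pos tau q_neq.
by rewrite (Rsum_eq0_ge0 tau gap_ge0 gap_sum0); lra.
Qed.

End MaxEntObjective.

Lemma compact_argmax_usc (X : topologicalType) (K : set X) (V : X -> ER) :
  compact K -> K !=set0 -> (forall c, closed [set x | ERle (Fin c) (V x)]) ->
  exists2 x, K x & forall y, K y -> ERle (V y) (V x).
Proof.
move=> K_compact [x0 Kx0] V_usc.
have [[y [Ky Vy]]|all_NegInf] := classic (exists y, K y /\ V y <> NegInf); last first.
  exists x0 => // y Ky; case Vy: (V y) => [c|] //.
  by case: all_NegInf; exists y; rewrite Vy.
pose D := [set z | K z /\ V z <> NegInf].
pose above z := [set x | ERle (V z) (V x)].
pose F := filter_from D (fun z => K `&` above z).
have F_proper : ProperFilter F.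
  apply: filter_from_proper => [|z [Kz _]]; last by exists z; split => //; exact: ERle_refl.
  apply: filter_from_filter; first by exists y.
  move=> i j Di Dj; have [Vij|Vji] := ERle_total (V i) (V j).
    by exists j => // z [Kz Vjz]; split; split => //; apply: ERle_trans Vjz.
  by exists i => // z [Kz Viz]; split; split => //; apply: ERle_trans Viz.
have [|x [Kx x_cluster]] := K_compact F F_proper; first by exists y => // z [].
exists x => // z Kz; case Vz: (V z) => [c|] //.
have Dz : D z by split => //; rewrite Vz.
have above_closed : closed (above z) by rewrite /above Vz; exact: V_usc.
rewrite -Vz; apply: above_closed; move: x_cluster; rewrite clusterE; apply.
by exists z => // w [].
Qed.

Lemma Rplus_continuous : continuous (fun z : R * R => Rplus z.1 z.2).
Proof. exact: (@add_continuous R^o). Qed.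

Lemma Rmult_continuous : continuous (fun z : R * R => Rmult z.1 z.2).
Proof. exact: (@mul_continuous R). Qed.

Lemma continuous_Rmult (X : topologicalType) (f g : X -> R) :
  continuous f -> continuous g -> continuous (fun x => f x * g x).
Proof. by move=> f_cont g_cont x; apply: (@continuousM R X _ _ x (f_cont x) (g_cont x)). Qed.

Lemma closed_preimage_ge (X : topologicalType) (g : X -> R) (c : R) :
  continuous g -> closed [set x | c <= g x].
Proof.
move=> g_cont; have := preimage_closed (fun x _ => g_cont x) (closed_ge (y := c)).
by congr closed; apply/seteqP; split => x /= /RleP.
Qed.

Lemma closed_preimage_eq (X : topologicalType) (g : X -> R) (c : R) :
  continuous g -> closed [set x | g x = c].
Proof. by move=> g_cont; exact: preimage_closed (fun x _ => g_cont x) (closed_eq (y := c)). Qed.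

Section RobustOptimum.
Variables (S A : finType) (T : nat) (p1 : S -> R) (p : S -> A -> S -> R).
Variable Rset : (S -> A -> R) -> Prop.
Hypothesis Rset_neq0 : exists r', Rset r'.

Local Notation coords := ('I_T * S * A)%type.

Definition policy_of (f : coords -> R) : policy S A T := fun t s a => f (t, s, a).

Definition policy_set : set (coords -> R) := [set f | is_policy (policy_of f)].

Lemma policy_le1 (sig : policy S A T) t s a : is_policy sig -> sig t s a <= 1.
Proof.
move=> [sig_ge0 sig_sum]; rewrite -(sig_sum t s) (bigD1 a) //=.
by have := Rsum_ge0 (fun b _ => sig_ge0 t s b) (P := fun b => b != a); lra.
Qed.

Lemma compact_policy_set : compact policy_set.
Proof.
apply: (subclosed_compact _ (tychonoff (fun k : coords => @segment_compact R 0 1))).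
  have -> : policy_set = \bigcap_(k in [set: coords]) [set f | 0 <= f k] `&`
      \bigcap_(ts in [set: 'I_T * S]) [set f | \big[Rplus/0]_a f (ts.1, ts.2, a) = 1].
    apply/seteqP; split => [f [f_ge0 f_sum]|f [f_ge0 f_sum]].
      by split=> [[[t s] a]|[t s]] _ /=; [apply: f_ge0 | apply: f_sum].
    by split=> [t s a|t s]; [apply: (f_ge0 (t, s, a)) | apply: (f_sum (t, s))].
  apply: closedI.
    by apply: closed_bigI => k _; apply: closed_preimage_ge; apply: proj_continuous.
  apply: closed_bigI => ts _; apply: closed_preimage_eq.
  by apply: (continuous_big Rplus_continuous) => a _; apply: proj_continuous.
move=> f f_policy [[t s] a]; rewrite /= in_itv /=; apply/andP; split; apply/RleP.
  by case: f_policy => f_ge0 _; apply: (f_ge0 t s a).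
exact: (policy_le1 t s a f_policy).
Qed.

Lemma continuous_ret (r' : S -> A -> R) :
  continuous (fun f : coords -> R => ret p1 p (policy_of f) r').
Proof.
apply: (continuous_big Rplus_continuous) => tau _.
apply: continuous_Rmult; last exact: cst_continuous.
apply: (continuous_big Rmult_continuous) => t _.
by apply: continuous_Rmult; [exact: cst_continuous | exact: proj_continuous].
Qed.

Lemma closed_robust_ge (c : R) :
  closed [set f : coords -> R | ERle (Fin c) (robust p1 p Rset (policy_of f))].
Proof.
have -> : [set f : coords -> R | ERle (Fin c) (robust p1 p Rset (policy_of f))] =
    \bigcap_(r' in Rset) [set f | c <= ret p1 p (policy_of f) r'].
  have ret_neq0 (pi : policy S A T) : exists x, exists r', Rset r' /\ x = ret p1 p pi r'.
    by have [r' Rr'] := Rset_neq0; exists (ret p1 p pi r'), r'.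
  apply/seteqP; split => f /=.
    by move/(ERinf_geP c (ret_neq0 _)) => c_le r' Rr'; apply: c_le; exists r'.
  by move=> c_le; apply/(ERinf_geP c (ret_neq0 _)) => _ [r' [Rr' ->]]; apply: c_le.
by apply: closed_bigI => r' _; apply: closed_preimage_ge; apply: continuous_ret.
Qed.

Lemma exists_robust_argmax : (exists sig : policy S A T, is_policy sig) ->
  exists pis : policy S A T, argmax_robust p1 p Rset pis.
Proof.
move=> [sig sig_policy].
have [|f f_policy f_max] := compact_argmax_usc compact_policy_set _ closed_robust_ge.
  by exists (fun k => sig k.1.1 k.1.2 k.2).
exists (policy_of f); split => // pi pi_policy.
exact: (f_max (fun k => pi k.1.1 k.1.2 k.2)).
Qed.

Lemma robust_eq_traj_prob (pi sig : policy S A T) :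
  (forall tau, traj_prob p1 p pi tau = traj_prob p1 p sig tau) ->
  robust p1 p Rset pi = robust p1 p Rset sig.
Proof.
move=> same_traj; rewrite /robust (_ : ret p1 p pi = ret p1 p sig) //.
by apply: funext => r'; apply: eq_bigr => tau _; rewrite same_traj.
Qed.

End RobustOptimum.

Local Close Scope R_scope.

Theorem theorem3 (S A : finType) (T : nat) (hT : (0 < T)%N)
  (p1 : S -> R) (p : S -> A -> S -> R)
  (hp1_nonneg : forall s, (0 <= p1 s)%R)
  (hp1_sum : \big[Rplus/0%R]_(s : S) p1 s = 1%R)
  (hp_nonneg : forall s a s', (0 <= p s a s')%R)
  (hp_sum : forall s a, \big[Rplus/0%R]_(s' : S) p s a s' = 1%R)
  (Rset : (S -> A -> R) -> Prop) (hR : exists r', Rset r') :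
  exists r : 'I_T -> S -> A -> ER,
    forall pi : policy S A T,
      argmax_J p1 p r pi -> argmax_robust p1 p Rset pi.
Proof.
have [policy_exists|no_policy] := classic (exists sig : policy S A T, is_policy sig); last first.
  by exists (fun _ _ _ => NegInf) => pi [pi_policy _]; case: no_policy; exists pi.
have [pis [pis_policy pis_max]] := exists_robust_argmax p1 p hR policy_exists.
have [s0] := Rsum_eq1_inhabited hp1_sum.
have [a0] := Rsum_eq1_inhabited (proj2 pis_policy (Ordinal hT) s0).
exists (log_reward pis) => pi [pi_policy pi_max]; split => // pi' pi'_policy.
have J_ge0 : ERle (Fin 0) (J p1 p pi (log_reward pis)).
  by rewrite -(J_log_reward_self hp1_nonneg hp_nonneg pis_policy); apply: pi_max.
have same_traj := traj_prob_eq_of_J_log_reward hp1_nonneg hp1_sum hp_nonneg hp_sum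
  (s0, a0) pis_policy pi_policy J_ge0.
by rewrite (robust_eq_traj_prob _ same_traj); apply: pis_max.
Qed.
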